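(* Let $n\geq 1$. A subset $T\subseteq S_n$ is Jacobi if and only if ${\sf Sum}(T)\in{\rm Ker}(\beta_n)$.
   Context: A Lie ring is a Lie algebra over $\mathbb Z$; the left-normed bracket is $[a_1]=a_1$, $[a_1,\dots,a_n]=[[a_1,\dots,a_{n-1}],a_n]$. $S_n$ is the symmetric group on $\{1,\dots,n\}$. A subset $T\subseteq S_n$ is Jacobi if $\sum_{\sigma\in T}[a_{\sigma(1)},\dots,a_{\sigma(n)}]=0$ for all elements $a_1,\dots,a_n$ of every Lie ring. Let $\mathbb Z\langle x_1,\dots,x_n\rangle$ be the free associative ring on $x_1,\dots,x_n$, regarded as a Lie ring with bracket $[u,v]=uv-vu$. Let $\gamma_n$ be the additive subgroup generated by the monomials $x_{\sigma(1)}\cdots x_{\sigma(n)}$, $\sigma\in S_n$ (a free abelian group with these monomials as basis). Let $\beta_n:\gamma_n\to\gamma_n$ be the homomorphism defined on the basis by $\beta_n(x_{\sigma(1)}\cdots x_{\sigma(n)})=[x_{\sigma(1)},\dots,x_{\sigma(n)}]$. For $T\subseteq S_n$, ${\sf Sum}(T)=\sum_{\sigma\in T}x_{\sigma(1)}\cdots x_{\sigma(n)}\in\gamma_n$. *)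

From HB Require Import structures.
From mathcomp Require Import all_boot all_order all_algebra all_fingroup.
Set Implicit Arguments. Unset Strict Implicit. Unset Printing Implicit Defensive.
Import GRing.Theory.
Local Open Scope ring_scope.

Definition is_lie_bracket (L : zmodType) (br : L -> L -> L) : Prop :=
  [/\ forall x y z, br (x + y) z = br x z + br y z,
      forall x y z, br x (y + z) = br x y + br x z,
      forall x, br x x = 0 &
      forall x y z, br (br x y) z + br (br y z) x + br (br z x) y = 0].

(* left-normed bracket [b_1, ..., b_k] = [[b_1,...,b_{k-1}], b_k] of a
   nonempty list (head default only used for the empty list) *)
Definition lnbr (T : Type) (br : T -> T -> T) (d : T) (l : seq T) : T :=
  foldl br (head d l) (behead l).

(* [a_{sigma(1)}, ..., a_{sigma(n)}] ; indices are 0..n-1 *)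
Definition perm_bracket (T : Type) (br : T -> T -> T) (d : T) (n : nat)
    (a : 'I_n -> T) (s : 'S_n) : T :=
  lnbr br d [seq a (s i) | i <- enum 'I_n].

Definition Jacobi (n : nat) (T : {set 'S_n}) : Prop :=
  forall (L : zmodType) (br : L -> L -> L), is_lie_bracket br ->
  forall a : 'I_n -> L, \sum_(s in T) perm_bracket br 0 a s = 0.

(* An element is given by its coefficient function on words (seq 'I_n);
   we allow arbitrary coefficient functions, i.e. we work in the ring of
   noncommutative formal power series, which contains Z<x_1,...,x_n> as a
   subring; the operations restrict to the usual ones on polynomials. *)
Definition nc (n : nat) := seq 'I_n -> int.

Definition nc0 n : nc n := fun _ => 0.
Definition ncadd n (f g : nc n) : nc n := fun w => f w + g w.
Definition ncopp n (f : nc n) : nc n := fun w => - f w.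
Definition ncmul n (f g : nc n) : nc n :=
  fun w => \sum_(i < (size w).+1) f (take i w) * g (drop i w).
Definition ncbr n (f g : nc n) : nc n := ncadd (ncmul f g) (ncopp (ncmul g f)).
Definition ncx n (i : 'I_n) : nc n := fun w => (w == [:: i])%:Z.

(* gamma_n: free abelian group on the monomials x_{s(1)}...x_{s(n)}, s in S_n,
   represented by coefficient vectors *)
Definition gamma (n : nat) := {ffun 'S_n -> int}.

Definition monomial n (s : 'S_n) : nc n :=
  fun w => (w == [seq s i | i <- enum 'I_n])%:Z.

Definition gamma_incl n (c : gamma n) : nc n :=
  fun w => \sum_(s : 'S_n) c s * monomial s w.

(* beta_n : gamma_n -> gamma_n, extended additively from
   x_{s(1)}...x_{s(n)} |-> [x_{s(1)},...,x_{s(n)}]; the value is given as an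
   element of Z<x> *)
Definition beta n (c : gamma n) : nc n :=
  fun w => \sum_(s : 'S_n) c s * (perm_bracket (@ncbr n) (@nc0 n) (@ncx n) s) w.

Definition in_ker_beta n (c : gamma n) : Prop := forall w, beta c w = 0.

Definition SumT n (T : {set 'S_n}) : gamma n := [ffun s => (s \in T)%:Z].

From mathcomp Require Import all_boot all_algebra all_fingroup.
From mathcomp Require Import boolp functions zify.
Set Implicit Arguments. Unset Strict Implicit. Unset Printing Implicit Defensive.
Import GRing.Theory.
Local Open Scope ring_scope.

(* Fix the generator x_1.  Anticommutativity and the Jacobi identity rewrite
   every left-normed bracket [a_{s(1)}, ..., a_{s(n)}] as an integer
   combination of brackets [a_1, a_{z_1}, ..., a_{z_{n-1}}] over words z
   avoiding 1, with coefficients that do not depend on the Lie ring.  In the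
   free associative ring, [x_1, x_{z_1}, ..., x_{z_{n-1}}] is the only such
   bracket containing the monomial x_1 z, with coefficient 1; so these
   coefficients, summed over s in T, are the coefficients of x_1 z in
   beta_n(Sum T).  Hence beta_n(Sum T) = 0 makes the sum over T of the
   brackets vanish in every Lie ring; the converse is the special case of the
   free ring with the commutator bracket. *)

(* A combination [P] stands for the operator u |-> \sum_(p <- P) p.1 [u, p.2],
   where [u, z] is the left-normed bracket of u with the letters of z. *)
Definition wcomb (I : Type) := seq (int * seq I).

(* [u, [v, y]] = [[u, v], y] - [[u, y], v] *)
Definition rbr_step I (P : wcomb I) (y : I) : wcomb I :=
  [seq (p.1, rcons p.2 y) | p <- P] ++ [seq (- p.1, y :: p.2) | p <- P].

Definition rbr_comb I (y0 : I) (ys : seq I) : wcomb I :=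
  foldl (@rbr_step I) [:: (1, [:: y0])] ys.

Definition pivot_comb I (l1 l2 : seq I) : wcomb I :=
  if l1 is y0 :: ys then [seq (- p.1, p.2 ++ l2) | p <- rbr_comb y0 ys]
  else [:: (1, l2)].

Definition comb_coef (I : eqType) (P : wcomb I) (z : seq I) : int :=
  \sum_(p <- P) (z == p.2)%:Z * p.1.

Lemma sum_comb_collect (I : eqType) (V : zmodType) (f : seq I -> V)
    (P : wcomb I) (Z : seq (seq I)) :
  uniq Z -> {subset [seq p.2 | p <- P] <= Z} ->
  \sum_(p <- P) f p.2 *~ p.1 = \sum_(z <- Z) f z *~ comb_coef P z.
Proof.
move=> uniqZ PZ; under [RHS]eq_bigr do rewrite mulrz_sumr.
rewrite exchange_big big_seq [RHS]big_seq; apply: eq_bigr => p Pp.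
have Zp : p.2 \in Z by apply: PZ; apply: map_f.
rewrite (bigD1_seq p.2) //= eqxx mul1r big1 ?addr0 // => z /negbTE ->.
by rewrite mul0r mulr0z.
Qed.

Lemma rbr_comb_notin (I : eqType) (x y0 : I) ys p :
  x \notin y0 :: ys -> p \in rbr_comb y0 ys -> x \notin p.2.
Proof.
elim/last_ind: ys p => [|ys y IH] p; first by move=> ?; rewrite inE => /eqP ->.
rewrite -rcons_cons mem_rcons in_cons negb_or => /andP [xy xys].
rewrite /rbr_comb foldl_rcons mem_cat => /orP [] /mapP [q qP ->] /=.
  by rewrite mem_rcons in_cons negb_or xy IH.
by rewrite in_cons negb_or xy IH.
Qed.

Lemma pivot_comb_notin (I : eqType) (x : I) l1 l2 p :
  x \notin l1 -> x \notin l2 -> p \in pivot_comb l1 l2 -> x \notin p.2.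
Proof.
case: l1 => [|y0 ys] xl1 xl2 /=; first by rewrite inE => /eqP ->.
case/mapP=> q qP ->; rewrite mem_cat negb_or xl2 andbT.
exact: rbr_comb_notin qP.
Qed.

Section LieRing.
Variables (L : zmodType) (br : L -> L -> L).
Hypothesis br_lie : is_lie_bracket br.

Lemma lieDl x y z : br (x + y) z = br x z + br y z.
Proof. by case: br_lie. Qed.

Lemma lieDr x y z : br x (y + z) = br x y + br x z.
Proof. by case: br_lie. Qed.

Lemma lie_alt x : br x x = 0.
Proof. by case: br_lie. Qed.

Lemma lie_jacobi x y z : br (br x y) z + br (br y z) x + br (br z x) y = 0.
Proof. by case: br_lie. Qed.

Lemma lie0l y : br 0 y = 0.
Proof. by apply: (addrI (br 0 y)); rewrite -lieDl !addr0. Qed.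

Lemma lieNl x y : br (- x) y = - br x y.
Proof. by apply: (addrI (br x y)); rewrite -lieDl !subrr lie0l. Qed.

Lemma lieMnl x y k : br (x *+ k) y = br x y *+ k.
Proof. by elim: k => [|k IH]; rewrite ?lie0l // !mulrS lieDl IH. Qed.

Lemma lieMzl x y (c : int) : br (x *~ c) y = br x y *~ c.
Proof.
case: c => k; first by rewrite -!pmulrn lieMnl.
by rewrite !NegzE !mulrNz lieNl -!pmulrn lieMnl.
Qed.

Lemma lie_suml (J : Type) (r : seq J) (F : J -> L) y :
  br (\sum_(j <- r) F j) y = \sum_(j <- r) br (F j) y.
Proof.
elim: r => [|j r IH]; first by rewrite !big_nil lie0l.
by rewrite !big_cons lieDl IH.
Qed.

Lemma lie_anti x y : br x y = - br y x.
Proof.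
have := lie_alt (x + y); rewrite lieDl !lieDr !lie_alt add0r addr0 => /eqP.
by rewrite addr_eq0 => /eqP.
Qed.

Lemma lie_jacobi_r u v w : br u (br v w) = br (br u v) w - br (br u w) v.
Proof.
have := lie_jacobi u v w; rewrite (lie_anti (br v w)) (lie_anti w u) lieNl.
by move/eqP; rewrite -addrA -opprD subr_eq0 => /eqP ->; rewrite addrK.
Qed.

Variables (I : Type) (a : I -> L).

Definition lbr u (z : seq I) := foldl br u (map a z).

Definition comb_eval (P : wcomb I) u := \sum_(p <- P) lbr u p.2 *~ p.1.

Lemma lbrDl x y z : lbr (x + y) z = lbr x z + lbr y z.
Proof. by elim: z x y => [|i z IH] x y //=; rewrite /lbr /= lieDl -IH. Qed.

Lemma lbr0l z : lbr 0 z = 0.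
Proof. by elim: z => [|i z IH] //; rewrite /lbr /= lie0l. Qed.

Lemma lbrNl x z : lbr (- x) z = - lbr x z.
Proof. by apply: (addrI (lbr x z)); rewrite -lbrDl !subrr lbr0l. Qed.

Lemma lbrMzl x z c : lbr (x *~ c) z = lbr x z *~ c.
Proof. by elim: z x => [|i z IH] x //; rewrite /lbr /= lieMzl; exact: IH. Qed.

Lemma lbr_suml (J : Type) (r : seq J) (F : J -> L) z :
  lbr (\sum_(j <- r) F j) z = \sum_(j <- r) lbr (F j) z.
Proof.
elim: r => [|j r IH]; first by rewrite !big_nil lbr0l.
by rewrite !big_cons lbrDl IH.
Qed.

Lemma lbr_cat u z1 z2 : lbr u (z1 ++ z2) = lbr (lbr u z1) z2.
Proof. by rewrite /lbr map_cat foldl_cat. Qed.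

Lemma lbr_rcons u z y : lbr u (rcons z y) = br (lbr u z) (a y).
Proof. by rewrite /lbr map_rcons foldl_rcons. Qed.

Lemma rbr_combE y0 ys u : br u (lbr (a y0) ys) = comb_eval (rbr_comb y0 ys) u.
Proof.
elim/last_ind: ys u => [|ys y IH] u; first by rewrite /comb_eval big_seq1.
rewrite lbr_rcons lie_jacobi_r !IH /rbr_comb foldl_rcons -/(rbr_comb y0 ys).
rewrite /comb_eval big_cat !big_map lie_suml -sumrN /=; congr (_ + _).
  by apply: eq_bigr => p _; rewrite lbr_rcons lieMzl.
by apply: eq_bigr => p _; rewrite mulrNz.
Qed.

Lemma pivot_combE l1 x l2 :
  lnbr br 0 (map a (l1 ++ x :: l2)) = comb_eval (pivot_comb l1 l2) (a x).
Proof.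
case: l1 => [|y0 ys]; first by rewrite /comb_eval big_seq1.
rewrite /lnbr /= map_cat foldl_cat /= lie_anti -/(lbr _ ys) rbr_combE.
rewrite -/(lbr _ l2) /comb_eval lbrNl lbr_suml -sumrN big_map.
by apply: eq_bigr => p _ /=; rewrite lbrMzl -lbr_cat mulrNz.
Qed.

End LieRing.

Lemma fct_mulrzE (T : Type) (V : zmodType) (f : T -> V) (c : int) x :
  (f *~ c) x = f x *~ c.
Proof.
case: c => k; first by rewrite -!pmulrn natmulfctE.
by rewrite !NegzE !mulrNz -!pmulrn natmulfctE.
Qed.

Lemma sum_nat_triangle (V : nmodType) (F : nat -> nat -> V) N :
  \sum_(0 <= i < N) \sum_(0 <= j < i.+1) F i j =
  \sum_(0 <= j < N) \sum_(j <= i < N) F i j.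
Proof.
transitivity (\sum_(0 <= i < N) \sum_(0 <= j < N) if (j <= i)%N then F i j else 0).
  rewrite !big_nat; apply: eq_bigr => i /andP [_ iN].
  rewrite (big_nat_widen _ _ _ _ _ iN) big_mkcond /= !big_nat.
  by apply: eq_bigr => j _; rewrite ltnS.
rewrite exchange_big_nat; apply: eq_bigr => j _.
by rewrite (big_nat_widenl _ _ _ _ _ (leq0n j)) big_mkcond.
Qed.

Section FreeRing.
Variable n : nat.
Implicit Types (f g h : nc n) (w : seq 'I_n).

Lemma ncmul_nat f g w :
  ncmul f g w = \sum_(0 <= i < (size w).+1) f (take i w) * g (drop i w).
Proof. by rewrite big_mkord. Qed.

Lemma ncmulDl f g h w : ncmul (f + g) h w = ncmul f h w + ncmul g h w.
Proof. by rewrite /ncmul -big_split; apply: eq_bigr => i _; rewrite mulrDl. Qed.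

Lemma ncmulDr f g h w : ncmul h (f + g) w = ncmul h f w + ncmul h g w.
Proof. by rewrite /ncmul -big_split; apply: eq_bigr => i _; rewrite mulrDr. Qed.

Lemma ncmulNl f g w : ncmul (- f) g w = - ncmul f g w.
Proof. by rewrite /ncmul -sumrN; apply: eq_bigr => i _; rewrite mulNr. Qed.

Lemma ncmulNr f g w : ncmul g (- f) w = - ncmul g f w.
Proof. by rewrite /ncmul -sumrN; apply: eq_bigr => i _; rewrite mulrN. Qed.

Lemma ncmulA f g h w : ncmul (ncmul f g) h w = ncmul f (ncmul g h) w.
Proof.
rewrite !ncmul_nat.
transitivity (\sum_(0 <= i < (size w).+1) \sum_(0 <= j < i.+1)
   f (take j w) * g (take (i - j) (drop j w)) * h (drop i w)).
  rewrite !big_nat; apply: eq_bigr => i /andP [_ iw].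
  rewrite ncmul_nat size_takel // big_distrl /= !big_nat.
  by apply: eq_bigr => j /andP [_ ji]; rewrite take_takel // take_drop subnK.
rewrite sum_nat_triangle !big_nat; apply: eq_bigr => j /andP [_ jw].
rewrite ncmul_nat size_drop big_distrr /= -{1}(add0n j) big_addn subSn //.
by rewrite !big_nat; apply: eq_bigr => k _; rewrite addnK drop_drop mulrA.
Qed.

Lemma ncbrE f g w : ncbr f g w = ncmul f g w - ncmul g f w.
Proof. by []. Qed.

Lemma ncmul_ncbrl f g h w :
  ncmul (ncbr f g) h w = ncmul f (ncmul g h) w - ncmul g (ncmul f h) w.
Proof. by rewrite [LHS]ncmulDl ncmulNl !ncmulA. Qed.

Lemma ncmul_ncbrr f g h w :
  ncmul h (ncbr f g) w = ncmul h (ncmul f g) w - ncmul h (ncmul g f) w.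
Proof. by rewrite [LHS]ncmulDr ncmulNr. Qed.

Lemma ncbr_lie : is_lie_bracket (@ncbr n).
Proof.
split=> [f g h|f g h|f|f g h]; apply/funext => w.
- by rewrite /ncbr /ncadd /ncopp ncmulDl ncmulDr /= opprD addrACA.
- by rewrite /ncbr /ncadd /ncopp ncmulDl ncmulDr /= opprD addrACA.
- by rewrite /ncbr /ncadd /ncopp subrr.
- rewrite !addrfctE !ncbrE !ncmul_ncbrl !ncmul_ncbrr.
  move: (ncmul f (ncmul g h) w) (ncmul f (ncmul h g) w) (ncmul g (ncmul f h) w)
    (ncmul g (ncmul h f) w) (ncmul h (ncmul f g) w) (ncmul h (ncmul g f) w).
  by move=> *; lia.
Qed.

Lemma ncmul_ncx_rcons f (i j : 'I_n) w :
  ncmul f (ncx i) (rcons w j) = f w * (j == i)%:Z.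
Proof.
rewrite /ncmul size_rcons big_ord_recr /= drop_oversize ?size_rcons //.
rewrite /ncx /= mulr0 addr0 big_ord_recr /= -cats1 take_size_cat //.
rewrite drop_size_cat //= eqseq_cons andbT big1 ?add0r // => k _.
suff /negbTE -> : drop k (w ++ [:: j]) != [:: i] by rewrite mulr0.
apply/eqP => /(congr1 size); rewrite size_drop size_cat /=.
by have := ltn_ord k; lia.
Qed.

Lemma ncmul_ncx_cons f (i j : 'I_n) w :
  ncmul (ncx i) f (j :: w) = (j == i)%:Z * f w.
Proof.
rewrite /ncmul big_ord_recl /= /ncx /= mul0r add0r big_ord_recl /=.
rewrite /bump /= take0 drop0 eqseq_cons andbT big1 ?addr0 // => k _.
suff /negbTE -> : take (bump 0 (bump 0 k)) (j :: w) != [:: i] by rewrite mul0r.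
apply/eqP => /(congr1 size); rewrite size_take /= /bump /=.
by have := ltn_ord k; case: ifP => _ /=; lia.
Qed.

(* The first letter of a word is x only in the term x z of [x, z]. *)
Lemma lbr_ncx_coef (x : 'I_n) z w : x \notin z ->
  lbr (@ncbr n) (@ncx n) (ncx x) z (x :: w) = (w == z)%:Z.
Proof.
elim/last_ind: z w => [|z y IH] w; first by rewrite /lbr /= /ncx eqseq_cons eqxx.
rewrite mem_rcons in_cons negb_or => /andP [xy xz].
rewrite lbr_rcons ncbrE ncmul_ncx_cons (negbTE xy) mul0r subr0.
case/lastP: w => [|w y'].
  by rewrite -[[:: x]]/(rcons [::] x) ncmul_ncx_rcons (negbTE xy) mulr0; case: z {IH xz}.
rewrite -rcons_cons ncmul_ncx_rcons IH // eqseq_rcons.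
by case: (w == z); case: (y' == y).
Qed.

Lemma comb_eval_ncx_coef (x : 'I_n) (P : wcomb 'I_n) w :
  (forall p, p \in P -> x \notin p.2) ->
  comb_eval (@ncbr n) (@ncx n) P (ncx x) (x :: w) = comb_coef P w.
Proof.
move=> Px; rewrite /comb_eval fct_sumE /comb_coef big_seq [RHS]big_seq.
by apply: eq_bigr => p Pp; rewrite fct_mulrzE lbr_ncx_coef ?Px // mulrzz.
Qed.

End FreeRing.

Lemma take_index_cat_drop (T : eqType) (x : T) w :
  x \in w -> take (index x w) w ++ x :: drop (index x w).+1 w = w.
Proof.
move=> xw; rewrite -[RHS](cat_take_drop (index x w)); congr (_ ++ _).
by rewrite [RHS](drop_nth x) ?index_mem // nth_index.
Qed.

Section PermBracket.
Variable n : nat.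

Definition perm_word (s : 'S_n) : seq 'I_n := [seq s i | i <- enum 'I_n].

Lemma perm_word_mem (x : 'I_n) s : x \in perm_word s.
Proof. by apply/mapP; exists (s^-1 x)%g; rewrite ?mem_enum ?permKV. Qed.

Lemma perm_word_uniq (s : 'S_n) : uniq (perm_word s).
Proof. by rewrite map_inj_uniq ?enum_uniq //; apply: perm_inj. Qed.

Definition perm_comb (x : 'I_n) (s : 'S_n) : wcomb 'I_n :=
  let w := perm_word s in pivot_comb (take (index x w) w) (drop (index x w).+1 w).

Lemma perm_bracket_comb (L : zmodType) (br : L -> L -> L) :
  is_lie_bracket br -> forall (a : 'I_n -> L) x s,
  perm_bracket br 0 a s = comb_eval br a (perm_comb x s) (a x).
Proof.
move=> br_lie a x s; rewrite /perm_bracket.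
have -> : [seq a (s i) | i <- enum 'I_n] = map a (perm_word s).
  by rewrite /perm_word -[RHS]map_comp.
by rewrite -{1}(take_index_cat_drop (perm_word_mem x s)) pivot_combE.
Qed.

Lemma perm_comb_notin (x : 'I_n) s p : p \in perm_comb x s -> x \notin p.2.
Proof.
have := perm_word_uniq s; rewrite -(take_index_cat_drop (perm_word_mem x s)) /perm_comb.
move: (take _ _) (drop _ _) => l1 l2.
rewrite cat_uniq => /and3P [_ xl1 /andP [xl2 _]].
by apply: pivot_comb_notin xl2; move: xl1; rewrite /= negb_or => /andP [].
Qed.

Lemma beta_SumT (T : {set 'S_n}) w :
  beta (SumT T) w = \sum_(s in T) perm_bracket (@ncbr n) 0 (@ncx n) s w.
Proof.
rewrite /beta [RHS]big_mkcond; apply: eq_bigr => s _.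
by rewrite /SumT ffunE; case: (s \in T); rewrite ?mul1r ?mul0r.
Qed.

Lemma beta_SumT_coef (T : {set 'S_n}) (x : 'I_n) z :
  beta (SumT T) (x :: z) = \sum_(s in T) comb_coef (perm_comb x s) z.
Proof.
rewrite beta_SumT; apply: eq_bigr => s _.
by rewrite (perm_bracket_comb (@ncbr_lie n) _ x) comb_eval_ncx_coef //; exact: perm_comb_notin.
Qed.

End PermBracket.

Theorem lemma2 (n : nat) (hn : (1 <= n)%N) (T : {set 'S_n}) :
  Jacobi T <-> in_ker_beta (SumT T).
Proof.
split=> [JT w | kerT L br br_lie a].
  move/(congr1 (fun f => f w)): (JT _ _ (@ncbr_lie n) (@ncx n)).
  by rewrite fct_sumE beta_SumT.
set x := Ordinal hn.
set Z := undup (flatten [seq [seq p.2 | p <- perm_comb x s] | s <- enum 'S_n]).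
have collect s : comb_eval br a (perm_comb x s) (a x) =
    \sum_(z <- Z) lbr br a (a x) z *~ comb_coef (perm_comb x s) z.
  apply: sum_comb_collect; first exact: undup_uniq.
  move=> z zs; rewrite mem_undup; apply/flattenP.
  by exists [seq p.2 | p <- perm_comb x s] => //; apply: map_f; rewrite mem_enum.
under eq_bigr do rewrite (perm_bracket_comb br_lie _ x) collect.
rewrite exchange_big big1 // => z _.
by rewrite -mulrz_sumr -beta_SumT_coef kerT mulr0z.
Qed.
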